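(* Let $\varepsilon,\delta>0$ and $s\ge1$ an integer. For $i\in[1:s]$ let $\rho^{(i)}\in\mathcal{D}(\mathcal{H})$ be a quantum state and $\Pi^{(i)}$ a projection operator on $\mathcal{H}$ such that $\mathrm{Tr}[\Pi^{(i)}\rho^{(i)}]\ge1-\varepsilon$. Then there exists a projection operator $\Pi^\star$ such that for all $i\in[1:s]$, $$\mathrm{Tr}[\Pi^\star\rho^{(i)}]\ge 1-\varepsilon-\delta\log(2s),$$ and $$\Pi^\star\preceq\left(\frac{2}{\delta^2}\right)^{\log(2s)}\left(\Pi^{(1)}+\Pi^{(2)}+\dots+\Pi^{(s)}\right).$$
   Context: $\mathcal{H}$ is a finite-dimensional Hilbert space, $\mathcal{D}(\mathcal{H})$ its set of density operators; $\log$ is base 2; $[1:s]=\{1,\dots,s\}$; $P\preceq Q$ means $Q-P$ is positive semi-definite. *)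

From HB Require Import structures.
From mathcomp Require Import all_boot all_order all_algebra.
From mathcomp Require Import sesquilinear.
From mathcomp Require Import complex.
From mathcomp Require Import reals exp.
Set Implicit Arguments. Unset Strict Implicit. Unset Printing Implicit Defensive.
Import Order.TTheory GRing.Theory Num.Theory.
Local Open Scope ring_scope.

Section QDefs.
Variable R : realType.
Local Notation C := (complex R).

Definition adj n (A : 'M[C]_n) : 'M[C]_n := map_mx Num.conj (A^T).

Definition psd n (A : 'M[C]_n) : Prop :=
  adj A = A /\ forall v : 'rV[C]_n, 0 <= (v *m A *m (map_mx Num.conj v^T)) 0 0.

Definition loewner_le n (P Q : 'M[C]_n) : Prop := psd (Q - P).

Definition density n (rho : 'M[C]_n) : Prop := psd rho /\ \tr rho = 1.

Definition projection n (P : 'M[C]_n) : Prop := adj P = P /\ P *m P = P.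

Definition log2 (x : R) : R := ln x / ln 2.

Definition rC (x : R) : C := real_complex R x.
End QDefs.

From HB Require Import structures.
From mathcomp Require Import all_boot all_order all_algebra.
From mathcomp Require Import complex.
From mathcomp Require Import reals exp.
From mathcomp Require Import sesquilinear spectral ring lra.
Set Implicit Arguments. Unset Strict Implicit. Unset Printing Implicit Defensive.
Import Order.TTheory GRing.Theory Num.Theory.
Local Open Scope ring_scope.

(* Let A be the sum of the Pi^(i) and let Pi* be the spectral projection of A
   onto its eigenvalues >= alpha, where 1/alpha = (2/delta^2)^log(2s); then
   Pi* <= A/alpha is immediate.  For Q = 1 - Pi* we have QAQ <= alpha Q, hence
   Q Pi Q <= alpha for each Pi = Pi^(i), and therefore also Pi Q Pi <= alpha
   (X X^* and X^* X have the same norm, X = Q Pi), while Pi' Q Pi' <= Pi' for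
   Pi' = 1 - Pi.  The operator inequality Q <= (1+t) Pi Q Pi + (1+1/t) Pi' Q Pi'
   then gives Tr[Q rho] <= (1+t) alpha + (1+1/t) eps, and t = 1/delta yields
   the claim once s >= 2, since then alpha <= delta^4/4.  For s = 1 take
   Pi* = Pi^(1), and take Pi* = 0 when the trace bound is not positive. *)

Section PsdMatrices.
Variable C : numClosedFieldType.
Local Open Scope sesquilinear_scope.

Lemma trmxC_mul m n p (A : 'M[C]_(m, n)) (B : 'M[C]_(n, p)) :
  (A *m B)^t* = B^t* *m A^t*.
Proof. by rewrite trmx_mul map_mxM. Qed.

Lemma trmxCD m n (A B : 'M[C]_(m, n)) : (A + B)^t* = A^t* + B^t*.
Proof. by rewrite linearD map_mxD. Qed.

Lemma trmxCB m n (A B : 'M[C]_(m, n)) : (A - B)^t* = A^t* - B^t*.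
Proof. by rewrite linearB map_mxB. Qed.

Lemma trmxCZ m n a (A : 'M[C]_(m, n)) : (a *: A)^t* = a^* *: A^t*.
Proof. by rewrite linearZ map_mxZ. Qed.

Lemma trmxC_scalar n a : (a%:M : 'M[C]_n)^t* = a^*%:M.
Proof. by rewrite tr_scalar_mx map_scalar_mx. Qed.

Definition qform n (v : 'rV[C]_n) (A : 'M[C]_n) : C := (v *m A *m v^t*) 0 0.

Definition psdmx n (A : 'M[C]_n) : Prop := A^t* = A /\ forall v, 0 <= qform v A.
Definition psd_le n (A B : 'M[C]_n) : Prop := psdmx (B - A).
Definition projmx n (P : 'M[C]_n) : Prop := P^t* = P /\ P *m P = P.

Lemma qformD n v (A B : 'M[C]_n) : qform v (A + B) = qform v A + qform v B.
Proof. by rewrite /qform mulmxDr mulmxDl mxE. Qed.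

Lemma qformN n v (A : 'M[C]_n) : qform v (- A) = - qform v A.
Proof. by rewrite /qform mulmxN mulNmx mxE. Qed.

Lemma qformB n v (A B : 'M[C]_n) : qform v (A - B) = qform v A - qform v B.
Proof. by rewrite qformD qformN. Qed.

Lemma qformZ n v a (A : 'M[C]_n) : qform v (a *: A) = a * qform v A.
Proof. by rewrite /qform -scalemxAr -scalemxAl mxE. Qed.

Lemma qform_scalar n v a : qform v (a%:M : 'M[C]_n) = a * qform v 1%:M.
Proof. by rewrite -qformZ scalemx1. Qed.

Lemma qform_conj n m v (B : 'M[C]_(n, m)) (A : 'M[C]_m) :
  qform v (B *m A *m B^t*) = qform (v *m B) A.
Proof. by rewrite /qform trmxC_mul !mulmxA. Qed.

Lemma qform1_ge0 n (v : 'rV[C]_n) : 0 <= qform v 1%:M.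
Proof. by rewrite /qform mulmx1 -dotmxE dnorm_ge0. Qed.

Lemma qform_gram_ge0 n m v (X : 'M[C]_(n, m)) : 0 <= qform v (X *m X^t*).
Proof. by have := qform1_ge0 (v *m X); rewrite -qform_conj mulmx1. Qed.

Lemma psdmx0 n : psdmx (0 : 'M[C]_n).
Proof. by split=> [|v]; rewrite ?trmx0 ?map_mx0 // /qform mulmx0 mul0mx mxE. Qed.

Lemma psdmxD n (A B : 'M[C]_n) : psdmx A -> psdmx B -> psdmx (A + B).
Proof.
move=> [hA pA] [hB pB]; split=> [|v]; first by rewrite trmxCD hA hB.
by rewrite qformD addr_ge0.
Qed.

Lemma psdmx_sum n I (r : seq I) (P : pred I) (F : I -> 'M[C]_n) :
  (forall i, psdmx (F i)) -> psdmx (\sum_(i <- r | P i) F i).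
Proof. by move=> psdF; elim/big_rec: _ => [|i A _]; [exact: psdmx0|exact: psdmxD]. Qed.

Lemma psdmxZ n a (A : 'M[C]_n) : 0 <= a -> psdmx A -> psdmx (a *: A).
Proof.
move=> a_ge0 [hA pA]; split=> [|v]; first by rewrite trmxCZ geC0_conj // hA.
by rewrite qformZ mulr_ge0.
Qed.

Lemma psdmx_conj n m (B : 'M[C]_(n, m)) A : psdmx A -> psdmx (B *m A *m B^t*).
Proof.
move=> [hA pA]; split=> [|v]; last by rewrite qform_conj.
by rewrite !trmxC_mul trmxCK hA mulmxA.
Qed.

Lemma psd_le_conj n m (B : 'M[C]_(n, m)) A A' :
  psd_le A A' -> psd_le (B *m A *m B^t*) (B *m A' *m B^t*).
Proof. by move=> /(psdmx_conj B); rewrite /psd_le mulmxBr mulmxBl. Qed.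

Lemma psd_le_trans n (A B D : 'M[C]_n) : psd_le A B -> psd_le B D -> psd_le A D.
Proof.
by move=> AB BD; rewrite /psd_le -(subrK B D) -addrA; exact: psdmxD.
Qed.

Lemma projmx_psd n (P : 'M[C]_n) : projmx P -> psdmx P.
Proof.
by move=> [hP PP]; split=> // v; rewrite -{1}PP -{2}hP qform_gram_ge0.
Qed.

Lemma projmx_compl n (P : 'M[C]_n) : projmx P -> projmx (1%:M - P).
Proof.
move=> [hP PP]; split; first by rewrite trmxCB trmxC_scalar conjC1 hP.
by rewrite mulmxBl !mulmxBr !mul1mx !mulmx1 PP subrr subr0.
Qed.

Lemma projmx_le1 n (P : 'M[C]_n) : projmx P -> psd_le P 1%:M.
Proof. by move/projmx_compl/projmx_psd. Qed.

Lemma psd_leZ n a (A B : 'M[C]_n) : 0 <= a -> psd_le A B -> psd_le (a *: A) (a *: B).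
Proof. by move=> a_ge0 AB; rewrite /psd_le -scalerBr; exact: psdmxZ. Qed.

Lemma qform_delta n (A : 'M[C]_n) j : qform (delta_mx 0 j) A = A j j.
Proof.
rewrite /qform -rowE mxE (bigD1 j) //= big1 ?addr0.
  by rewrite !mxE !eqxx /= conjC1 mulr1.
by move=> k kj; rewrite !mxE (negbTE kj) /= conjC0 mulr0.
Qed.

Lemma psdmx_diag_ge0 n (A : 'M[C]_n) j : psdmx A -> 0 <= A j j.
Proof. by move=> [_ psdA]; rewrite -qform_delta. Qed.

Lemma psdmx_diag n (d : 'rV[C]_n) : (forall j, 0 <= d 0 j) -> psdmx (diag_mx d).
Proof.
move=> d_ge0; split=> [|v].
  rewrite tr_diag_mx map_diag_mx; congr diag_mx; apply/rowP => j.
  by rewrite !mxE; apply/eqP; rewrite -CrealE; apply: ger0_real.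
rewrite /qform mul_mx_diag mxE; apply: sumr_ge0 => k _.
by rewrite !mxE mulrAC mulr_ge0 ?mul_conjC_ge0.
Qed.

Lemma psdmx_unitary_diag n (A : 'M[C]_n) : psdmx A ->
  exists (U : 'M[C]_n) (d : 'rV[C]_n), [/\ U *m U^t* = 1%:M, U^t* *m U = 1%:M,
                  A = U^t* *m diag_mx d *m U & forall j, 0 <= d 0 j].
Proof.
move=> psdA; set U := spectralmx A; set d := spectral_diag A.
have /unitarymxP UUt := spectral_unitarymx A.
have UtU : U^t* *m U = 1%:M := mulmx1C UUt.
have normA : A \is normalmx by apply/normalmxP; rewrite psdA.1.
have eA : A = U^t* *m diag_mx d *m U.
  by rewrite -invmx_unitary ?spectral_unitarymx //; exact/orthomx_spectralP.
exists U, d; split=> // j.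
have := psdmx_diag_ge0 j (psdmx_conj U psdA).
by rewrite eA !mulmxA UUt mul1mx -mulmxA UUt mulmx1 mxE eqxx mulr1n.
Qed.

Lemma mxtrace_psd_mul_ge0 n (A B : 'M[C]_n) : psdmx A -> psdmx B -> 0 <= \tr (A *m B).
Proof.
move=> psdA psdB; have [U [d [_ _ eB d_ge0]]] := psdmx_unitary_diag psdB.
have -> : \tr (A *m B) = \tr (U *m A *m U^t* *m diag_mx d).
  by rewrite eB !mulmxA mxtrace_mulC !mulmxA.
rewrite mul_mx_diag /mxtrace; apply: sumr_ge0 => j _; rewrite mxE.
by rewrite mulr_ge0 // (psdmx_diag_ge0 j (psdmx_conj U psdA)).
Qed.

Lemma psd_le_mxtrace n (A B rho : 'M[C]_n) :
  psdmx rho -> psd_le A B -> \tr (A *m rho) <= \tr (B *m rho).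
Proof.
move=> psd_rho AB; rewrite -subr_ge0 -linearB /= -mulmxBl.
exact: mxtrace_psd_mul_ge0.
Qed.

Section UnitaryDiagonal.
Variables (n : nat) (U : 'M[C]_n).
Hypotheses (UUt : U *m U^t* = 1%:M) (UtU : U^t* *m U = 1%:M).

Definition udiag (d : 'rV[C]_n) : 'M[C]_n := U^t* *m diag_mx d *m U.

Lemma udiagM (d d' : 'rV[C]_n) : udiag d *m udiag d' = udiag (\row_j (d 0 j * d' 0 j)).
Proof.
rewrite /udiag -!mulmxA (mulmxA U) UUt mul1mx (mulmxA (diag_mx d)) mulmx_diag.
by rewrite !mulmxA.
Qed.

Lemma udiagB (d d' : 'rV[C]_n) : udiag d - udiag d' = udiag (d - d').
Proof. by rewrite /udiag linearB /= mulmxBr mulmxBl. Qed.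

Lemma udiagZ a (d : 'rV[C]_n) : a *: udiag d = udiag (a *: d).
Proof. by rewrite /udiag linearZ /= -scalemxAr -scalemxAl. Qed.

Lemma udiag1 : udiag (const_mx 1) = 1%:M.
Proof. by rewrite /udiag diag_const_mx mulmx1 UtU. Qed.

Lemma udiag_psd (d : 'rV[C]_n) : (forall j, 0 <= d 0 j) -> psdmx (udiag d).
Proof. by move=> d_ge0; have := psdmx_conj (U^t*) (psdmx_diag d_ge0); rewrite trmxCK. Qed.

Lemma udiag_proj (p : pred 'I_n) : projmx (udiag (\row_j (p j)%:R)).
Proof.
split; last by rewrite udiagM; congr udiag; apply/rowP => j; rewrite !mxE; case: (p j);
  rewrite ?mulr0 ?mulr1.
rewrite /udiag !trmxC_mul trmxCK tr_diag_mx map_diag_mx mulmxA; congr (_ *m _ *m _).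
by congr diag_mx; apply/rowP => j; rewrite !mxE rmorph_nat.
Qed.

End UnitaryDiagonal.

Lemma psdmx_spectral_cutoff n (A : 'M[C]_n) a : 0 < a -> psdmx A ->
  exists P, [/\ projmx P, psd_le P (a^-1 *: A) &
    psd_le ((1%:M - P) *m A *m (1%:M - P)) (a *: (1%:M - P))].
Proof.
move=> a_gt0 psdA; have [U [d [UUt UtU eA d_ge0]]] := psdmx_unitary_diag psdA.
have d_lt j : ~~ (a <= d 0 j) -> d 0 j < a.
  by rewrite real_leNgt ?ger0_real ?d_ge0 ?ltW // negbK.
pose P := udiag U (\row_j (a <= d 0 j)%R%:R).
have eQ : 1%:M - P = udiag U (\row_j (~~ (a <= d 0 j))%R%:R).
  rewrite -(udiag1 UtU) udiagB; congr udiag; apply/rowP => j; rewrite !mxE.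
  by case: (a <= d 0 j); rewrite ?subrr ?subr0.
exists P; split; first exact: (udiag_proj UUt (fun j => a <= d 0 j)%R).
  rewrite /psd_le eA -/(udiag U d) udiagZ udiagB; apply: udiag_psd => j.
  rewrite !mxE; case: (boolP (a <= d 0 j)) => [ad|_] /=; last first.
    by rewrite subr0 mulr_ge0 ?invr_ge0 ?d_ge0 ?ltW.
  by rewrite subr_ge0 -(mulVf (lt0r_neq0 a_gt0)) ler_pM2l ?invr_gt0.
rewrite /psd_le eQ eA -/(udiag U d) !(udiagM UUt) udiagZ udiagB; apply: udiag_psd => j.
rewrite !mxE; case: (boolP (a <= d 0 j)) => [_|/d_lt dj] /=; first by rewrite !mulr0 subrr.
by rewrite !mulr1 mul1r subr_ge0 ltW.
Qed.

(* A square-root-free Cauchy-Schwarz: expand |v (B - a)|^2 >= 0. *)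
Lemma qform_le_of_sqr n (B : 'M[C]_n) a v : 0 < a -> B^t* = B ->
  qform v (B *m B) <= a * qform v B -> qform v B <= a * qform v 1%:M.
Proof.
move=> a_gt0 B_herm BB_le; have a_real : a^* = a by rewrite geC0_conj ?ltW.
have := qform_gram_ge0 v (B - a%:M); rewrite trmxCB trmxC_scalar a_real B_herm.
rewrite mulmxBl !mulmxBr mul_scalar_mx mul_mx_scalar -scalar_mxM !qformB qformZ.
rewrite qform_scalar => sq_ge0.
have ineq (x y z : C) : x <= a * y ->
    0 <= x - a * y - (a * y - a * a * z) -> 0 <= a * (a * z - y).
  move=> xy /le_trans; apply; rewrite -subr_ge0.
  have -> : a * (a * z - y) - (x - a * y - (a * y - a * a * z)) = a * y - x by ring.
  by rewrite subr_ge0.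
by rewrite -subr_ge0 -(pmulr_rge0 _ a_gt0) (ineq _ _ _ BB_le sq_ge0).
Qed.

Lemma psd_le_scalar_trmxC_mul n (X : 'M[C]_n) a : 0 < a ->
  psd_le (X *m X^t*) a%:M -> psd_le (X^t* *m X) a%:M.
Proof.
move=> a_gt0 [_ XXt_le]; have a_real : a^* = a by rewrite geC0_conj ?ltW.
split=> [|v]; first by rewrite trmxCB trmxC_scalar a_real trmxC_mul trmxCK.
rewrite qformB qform_scalar subr_ge0.
apply: qform_le_of_sqr; rewrite ?trmxC_mul ?trmxCK //.
have := XXt_le (v *m X^t*); rewrite qformB qform_scalar subr_ge0.
by rewrite -!qform_conj trmxCK mulmx1 !mulmxA.
Qed.

Lemma proj_sandwich_le_scalar n (Q Pi A : 'M[C]_n) a : 0 < a ->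
  projmx Q -> projmx Pi -> psd_le Pi A ->
  psd_le (Q *m A *m Q) (a *: Q) -> psd_le (Pi *m Q *m Pi) a%:M.
Proof.
move=> a_gt0 Q_proj [Pi_herm PiPi] Pi_le_A QAQ_le; have [Q_herm QQ] := Q_proj.
have -> : Pi *m Q *m Pi = (Q *m Pi)^t* *m (Q *m Pi).
  by rewrite trmxC_mul Q_herm Pi_herm mulmxA -(mulmxA Pi Q Q) QQ.
apply: psd_le_scalar_trmxC_mul => //.
have -> : Q *m Pi *m (Q *m Pi)^t* = Q *m Pi *m Q^t*.
  by rewrite trmxC_mul Pi_herm mulmxA -(mulmxA Q Pi Pi) PiPi.
apply: psd_le_trans (psd_le_conj Q Pi_le_A) _; rewrite Q_herm.
apply: psd_le_trans QAQ_le _; rewrite -scalemx1.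
exact: psd_leZ (ltW a_gt0) (projmx_le1 Q_proj).
Qed.

Lemma mxtrace_pinching_le n (Q rho Pi : 'M[C]_n) t : 0 < t ->
  psdmx Q -> psdmx rho -> projmx Pi ->
  \tr (Q *m rho) <= (1 + t) * \tr (Pi *m Q *m Pi *m rho)
                    + (1 + t^-1) * \tr ((1%:M - Pi) *m Q *m (1%:M - Pi) *m rho).
Proof.
move=> t_gt0 psdQ psd_rho Pi_proj; set Pi' := 1%:M - Pi.
have [Pi'_herm _] : projmx Pi' := projmx_compl Pi_proj.
have Pi_Pi' : 1 *: Pi + 1 *: Pi' = 1%:M by rewrite !scale1r addrC subrK.
clearbody Pi'.
pose tr2 X Y := \tr (Q *m X *m rho *m Y).
have tr2_expand a b c d : tr2 (a *: Pi + b *: Pi') (c *: Pi + d *: Pi') =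
    a * c * tr2 Pi Pi + a * d * tr2 Pi Pi' + b * c * tr2 Pi' Pi + b * d * tr2 Pi' Pi'.
  rewrite /tr2 !(mulmxDr, mulmxDl) -!scalemxAr -!scalemxAl -?scalemxAr.
  by rewrite !linearD !linearZ /=; ring.
have tr_Q : \tr (Q *m rho) = tr2 Pi Pi + tr2 Pi Pi' + tr2 Pi' Pi + tr2 Pi' Pi'.
  by have := tr2_expand 1 1 1 1; rewrite Pi_Pi' !mulr1 !mul1r => <-; rewrite /tr2 !mulmx1.
(* Tr[Q B rho B] >= 0 for the Hermitian B = t Pi - Pi' controls the cross terms. *)
have cross_ge0 : 0 <= t * t * tr2 Pi Pi - t * tr2 Pi Pi' - t * tr2 Pi' Pi + tr2 Pi' Pi'.
  have -> : t * t * tr2 Pi Pi - t * tr2 Pi Pi' - t * tr2 Pi' Pi + tr2 Pi' Pi' =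
      tr2 (t *: Pi + (-1) *: Pi') (t *: Pi + (-1) *: Pi') by rewrite tr2_expand; ring.
  set B := t *: Pi + (-1) *: Pi'.
  have B_herm : B^t* = B.
    by rewrite trmxCD !trmxCZ geC0_conj ?ltW // Pi'_herm Pi_proj.1 rmorphN1.
  by have := mxtrace_psd_mul_ge0 psdQ (psdmx_conj B psd_rho); rewrite B_herm !mulmxA.
have -> : \tr (Pi *m Q *m Pi *m rho) = tr2 Pi Pi by rewrite [RHS]mxtrace_mulC !mulmxA.
have -> : \tr (Pi' *m Q *m Pi' *m rho) = tr2 Pi' Pi'.
  by rewrite [RHS]mxtrace_mulC !mulmxA.
rewrite tr_Q -subr_ge0.
have -> : (1 + t) * tr2 Pi Pi + (1 + t^-1) * tr2 Pi' Pi'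
    - (tr2 Pi Pi + tr2 Pi Pi' + tr2 Pi' Pi + tr2 Pi' Pi')
    = t^-1 * (t * t * tr2 Pi Pi - t * tr2 Pi Pi' - t * tr2 Pi' Pi + tr2 Pi' Pi').
  by field; rewrite lt0r_neq0.
by rewrite mulr_ge0 // invr_ge0 ltW.
Qed.

Lemma spectral_cutoff_mxtrace_bound n s (rho Pi : 'I_s -> 'M[C]_n) (a t e : C) :
  0 < a -> 0 < t ->
  (forall i, psdmx (rho i) /\ \tr (rho i) = 1) -> (forall i, projmx (Pi i)) ->
  (forall i, 1 - e <= \tr (Pi i *m rho i)) ->
  exists P, [/\ projmx P, psd_le P (a^-1 *: \sum_i Pi i) &
    forall i, 1 - ((1 + t) * a + (1 + t^-1) * e) <= \tr (P *m rho i)].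
Proof.
move=> a_gt0 t_gt0 rho_density Pi_proj Pi_rho.
have Pi_psd i : psdmx (Pi i) := projmx_psd (Pi_proj i).
have sum_psd : psdmx (\sum_i Pi i) by exact: psdmx_sum.
have [P [P_proj P_le QAQ_le]] := psdmx_spectral_cutoff a_gt0 sum_psd.
exists P; split=> // i; have [rho_psd tr_rho] := rho_density i.
set Q := 1%:M - P in QAQ_le; have Q_proj : projmx Q := projmx_compl P_proj.
set Pi' := 1%:M - Pi i; have [Pi'_herm Pi'Pi'] : projmx Pi' := projmx_compl (Pi_proj i).
have Pi_le_sum : psd_le (Pi i) (\sum_j Pi j).
  by rewrite /psd_le (bigD1 i) //= addrC addrK; exact: psdmx_sum.
have PiQPi_le : \tr (Pi i *m Q *m Pi i *m rho i) <= a.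
  have := psd_le_mxtrace rho_psd
    (proj_sandwich_le_scalar a_gt0 Q_proj (Pi_proj i) Pi_le_sum QAQ_le).
  by rewrite mul_scalar_mx linearZ /= tr_rho mulr1.
have Pi'QPi'_le : \tr (Pi' *m Q *m Pi' *m rho i) <= e.
  have := psd_le_mxtrace rho_psd (psd_le_conj Pi' (projmx_le1 Q_proj)).
  rewrite Pi'_herm mulmx1 Pi'Pi' => /le_trans; apply.
  by rewrite mulmxBl mul1mx linearB /= tr_rho lerBlDl addrC -lerBlDl.
have -> : P = 1%:M - Q by rewrite /Q opprB addrC subrK.
rewrite mulmxBl mul1mx linearB /= tr_rho lerD2l lerN2.
apply: le_trans (mxtrace_pinching_le t_gt0 (projmx_psd Q_proj) rho_psd (Pi_proj i)) _.
by rewrite lerD // ler_wpM2l // addr_ge0 ?invr_ge0 ?ltW.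
Qed.

Lemma psd_le_scale_proj n (P : 'M[C]_n) a : 1 <= a -> projmx P -> psd_le P (a *: P).
Proof.
move=> a_ge1 P_proj; rewrite /psd_le -{2}[P]scale1r -scalerBl.
by apply: psdmxZ (projmx_psd P_proj); rewrite subr_ge0.
Qed.

End PsdMatrices.

Lemma log2_ge_nat (R : realType) k (x : R) : 2 ^+ k <= x -> k%:R <= log2 x.
Proof.
move=> x_ge; have two_gt0 : (0 : R) < 2 by rewrite ltr0n.
have x_gt0 : 0 < x by apply: lt_le_trans x_ge; rewrite exprn_gt0.
rewrite /log2 ler_pdivlMr ?ln_gt0 ?ltr1n // mulr_natl -lnXn //.
by rewrite ler_ln ?posrE ?exprn_gt0.
Qed.

Lemma inv_sqr_scale_ge1 (R : realFieldType) (delta : R) :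
  0 < delta -> delta <= 1 -> 1 <= 2 / delta ^+ 2.
Proof.
move=> delta_gt0 delta_le1; rewrite ler_pdivlMr ?exprn_gt0 // mul1r.
have := exprn_ile1 2 (ltW delta_gt0) delta_le1; lra.
Qed.

Lemma cutoff_scale_ge1 (R : realType) (delta L : R) :
  0 < delta -> 1 <= L -> delta * L <= 1 -> 1 <= powR (2 / delta ^+ 2) L.
Proof.
move=> delta_gt0 L_ge1 dL_le1.
have a_ge1 : 1 <= 2 / delta ^+ 2.
  exact: inv_sqr_scale_ge1 (le_trans (ler_peMr (ltW delta_gt0) L_ge1) dL_le1).
exact: le_trans a_ge1 (le1r_powR a_ge1 L_ge1).
Qed.

Lemma cutoff_error_le (R : realType) (delta eps L : R) :
  0 < delta -> 0 <= eps -> 2 <= L -> 0 < 1 - eps - delta * L ->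
  (1 + delta^-1) * (powR (2 / delta ^+ 2) L)^-1 + (1 + delta) * eps <= eps + delta * L.
Proof.
move=> delta_gt0 eps_ge0 L_ge2 bound_gt0; have delta_neq0 : delta != 0 by rewrite lt0r_neq0.
have d_L : delta * 2 <= delta * L := ler_wpM2l (ltW delta_gt0) L_ge2.
have delta_lt1 : delta < 1 by lra.
have eps_le1 : eps <= 1 by lra.
have a_ge1 := inv_sqr_scale_ge1 delta_gt0 (ltW delta_lt1).
have a_gt0 := lt_le_trans ltr01 a_ge1.
have inv_c_le : (powR (2 / delta ^+ 2) L)^-1 <= delta ^+ 4 / 4.
  have -> : delta ^+ 4 / 4 = ((2 / delta ^+ 2) ^+ 2)^-1 by field.
  rewrite lef_pV2 ?posrE ?exprn_gt0 ?powR_gt0 // -(powR_mulrn _ (ltW a_gt0)).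
  exact: ler_powR.
have first_le :
    (1 + delta^-1) * (powR (2 / delta ^+ 2) L)^-1 <= (delta ^+ 4 + delta ^+ 3) / 4.
  have -> : (delta ^+ 4 + delta ^+ 3) / 4 = (1 + delta^-1) * (delta ^+ 4 / 4) by field.
  by apply: ler_wpM2l inv_c_le; rewrite addr_ge0 ?invr_ge0 ?ltW.
have d4 := @ler_iXnr _ _ 4 isT (ltW delta_gt0) (ltW delta_lt1).
have d3 := @ler_iXnr _ _ 3 isT (ltW delta_gt0) (ltW delta_lt1).
have d_eps : delta * eps <= delta := ler_piMr (ltW delta_gt0) eps_le1.
lra.
Qed.

Theorem lemma3 (R : realType) (n s : nat) (eps delta : R)
    (rho Pi : 'I_s -> 'M[complex R]_n) :
  0 < eps -> 0 < delta -> (1 <= s)%N ->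
  (forall i, density (rho i)) ->
  (forall i, projection (Pi i)) ->
  (forall i, rC (1 - eps) <= \tr (Pi i *m rho i)) ->
  exists PiS : 'M[complex R]_n,
    projection PiS /\
    (forall i, rC (1 - eps - delta * log2 (2 * s%:R)) <= \tr (PiS *m rho i)) /\
    loewner_le PiS
      (rC (powR (2 / delta ^+ 2) (log2 (2 * s%:R))) *: \sum_(i < s) Pi i).
Proof.
move=> eps_gt0 delta_gt0 s_ge1 rho_density Pi_proj Pi_rho.
set L := log2 (2 * s%:R); set c := powR (2 / delta ^+ 2) L.
have L_ge1 : 1 <= L.
  by rewrite -[1]/(1%:R : R); apply: log2_ge_nat; rewrite expr1 ler_peMr ?ler1n.
have [bound_le0|bound_gt0] := lerP (1 - eps - delta * L) 0.
  exists 0; split; first by rewrite /projection /adj trmx0 map_mx0 mulmx0.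
  split=> [i|]; first by rewrite mul0mx mxtrace0 lecR.
  rewrite /loewner_le subr0; apply: psdmxZ; first by rewrite lecR powR_ge0.
  by apply: psdmx_sum => i; exact: projmx_psd (Pi_proj i).
have c_ge1 : 1 <= c by apply: cutoff_scale_ge1 => //; lra.
have [s_gt1|s_le1] := ltnP 1 s; last first.
  have s_eq1 : s = 1%N by apply/eqP; rewrite eqn_leq s_le1.
  subst s; exists (Pi ord0); split; first exact: Pi_proj.
  split=> [i|]; first by rewrite (ord1 i); apply: le_trans (Pi_rho ord0); rewrite lecR; nra.
  rewrite big_ord1; apply: psd_le_scale_proj (Pi_proj ord0).
  by rewrite -[1 : complex R]/(rC 1) lecR.
have L_ge2 : 2 <= L by apply: log2_ge_nat; rewrite -natrX -natrM ler_nat (@leq_mul 2 2).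
have inv_c_gt0 : 0 < rC c^-1 by rewrite ltcR invr_gt0 (lt_le_trans ltr01 c_ge1).
have inv_delta_gt0 : 0 < rC delta^-1 by rewrite ltcR invr_gt0.
have Pi_rho' i : 1 - rC eps <= \tr (Pi i *m rho i).
  by have := Pi_rho i; rewrite /rC rmorphB rmorph1.
have [P [P_proj P_le P_rho]] :=
  spectral_cutoff_mxtrace_bound inv_c_gt0 inv_delta_gt0 rho_density Pi_proj Pi_rho'.
exists P; split; first exact: P_proj.
split; last by move: P_le; rewrite /rC fmorphV invrK.
move=> i; apply: le_trans (P_rho i).
have -> : 1 - ((1 + rC delta^-1) * rC c^-1 + (1 + (rC delta^-1)^-1) * rC eps) =
    rC (1 - ((1 + delta^-1) * c^-1 + (1 + delta) * eps)).
  by rewrite /rC !(rmorphB, rmorphD, rmorphM, rmorph1, fmorphV) invrK.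
rewrite lecR -addrA lerD2l -opprD lerN2.
exact: cutoff_error_le (ltW eps_gt0) L_ge2 bound_gt0.
Qed.
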